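(* Let $(X,<)$ be a Banach lattice with lattice norm $\|\cdot\|$, and let $A=(\alpha_{ij})_{i,j\in\mathbb{N}}$ be a regular matrix with non-negative entries. Then the $A$-convergence on $X$ preserves order-inequalities.
   Context: A non-negative matrix $A=(\alpha_{ij})$ is regular if $\sup_n\sum_j\alpha_{nj}<\infty$, $\lim_n\alpha_{ni}=0$ for each $i$, and $\lim_n\sum_i\alpha_{ni}=1$. A sequence $(x_j)$ in $X$ is $A$-convergent to $L$ (written $x_j\overset{A}{\longrightarrow}L$) if $\lim_n\sum_j\alpha_{nj}x_j=L$ in norm; the $A$-convergence is the summability method with domain $\mathcal{D}_A$ the $A$-convergent sequences. For $u\in X$, $|u|=u\vee(-u)$. A summability method $\mathcal{R}$ preserves order-inequalities if: whenever $(w_n),(x_n),(y_n),(z_n)\in\mathcal{D}_{\mathcal{R}}$, $w,x,y,z\in X$ and $C>0$ satisfy, for all $n$, $-C[(x_n-x)+(y_n-y)+(z_n-z)]<w_n-w<C[(x_n-x)+(y_n-y)+(z_n-z)]$ in the lattice order, and $x_n\overset{\mathcal{R}}{\longrightarrow}x$, $y_n\overset{\mathcal{R}}{\longrightarrow}y$, $z_n\overset{\mathcal{R}}{\longrightarrow}z$, then $w_n\overset{\mathcal{R}}{\longrightarrow}w$. *)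

From HB Require Import structures.
From mathcomp Require Import all_boot all_order all_algebra.
From mathcomp Require Import all_classical all_reals all_analysis.
Set Implicit Arguments. Unset Strict Implicit. Unset Printing Implicit Defensive.
Import Order.TTheory GRing.Theory Num.Theory.
Import numFieldNormedType.Exports.
Local Open Scope classical_set_scope.
Local Open Scope ring_scope.

Definition absl (R : realType) (X : completeNormedModType R)
  (vee : X -> X -> X) (u : X) : X := vee u (- u).

Record banach_lattice (R : realType) (X : completeNormedModType R)
  (le : X -> X -> Prop) (vee : X -> X -> X) : Prop := {
  bl_refl : forall x, le x x;
  bl_antisym : forall x y, le x y -> le y x -> x = y;
  bl_trans : forall x y z, le x y -> le y z -> le x z;
  bl_add : forall x y z, le x y -> le (x + z) (y + z);
  bl_scale : forall (a : R) x y, 0 <= a -> le x y -> le (a *: x) (a *: y);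
  bl_vee_ubl : forall x y, le x (vee x y);
  bl_vee_ubr : forall x y, le y (vee x y);
  bl_vee_least : forall x y z, le x z -> le y z -> le (vee x y) z;
  bl_norm : forall x y, le (absl vee x) (absl vee y) -> `|x| <= `|y|
}.

Definition nonneg_matrix (R : realType) (alpha : nat -> nat -> R) : Prop :=
  forall n j, 0 <= alpha n j.

Definition regular_matrix (R : realType) (alpha : nat -> nat -> R) : Prop :=
  (exists M : R, forall n N, \sum_(0 <= j < N) alpha n j <= M) /\
  (forall i, (fun n => alpha n i) @ \oo --> (0 : R)) /\
  (exists r : nat -> R,
     (forall n, (fun N => \sum_(0 <= j < N) alpha n j) @ \oo --> r n) /\
     r @ \oo --> (1 : R)).

Definition A_converges (R : realType) (X : completeNormedModType R)
  (alpha : nat -> nat -> R) (x : nat -> X) (L : X) : Prop :=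
  exists y : nat -> X,
    (forall n, (fun N => \sum_(0 <= j < N) alpha n j *: x j) @ \oo --> y n) /\
    y @ \oo --> L.

Definition A_domain (R : realType) (X : completeNormedModType R)
  (alpha : nat -> nat -> R) (x : nat -> X) : Prop :=
  exists L : X, A_converges alpha x L.

Definition preserves_order_inequalities (R : realType)
  (X : completeNormedModType R) (le : X -> X -> Prop)
  (alpha : nat -> nat -> R) : Prop :=
  forall (wn xn yn zn : nat -> X) (w x y z : X) (C : R),
    A_domain alpha wn -> A_domain alpha xn ->
    A_domain alpha yn -> A_domain alpha zn ->
    0 < C ->
    (forall n,
       le (- (C *: ((xn n - x) + (yn n - y) + (zn n - z)))) (wn n - w) /\
       le (wn n - w) (C *: ((xn n - x) + (yn n - y) + (zn n - z)))) ->
    A_converges alpha xn x -> A_converges alpha yn y ->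
    A_converges alpha zn z ->
    A_converges alpha wn w.

From mathcomp Require Import all_boot all_order all_algebra.
From mathcomp Require Import all_classical all_reals all_analysis.
Import Order.TTheory GRing.Theory Num.Theory.
Import numFieldNormedType.Exports.
Set Implicit Arguments. Unset Strict Implicit. Unset Printing Implicit Defensive.
Local Open Scope classical_set_scope.
Local Open Scope ring_scope.

(* Since the entries of A are non-negative, the order bounds
   -s_j <= w_j - w <= s_j, with s_j := C((x_j - x) + (y_j - y) + (z_j - z)),
   pass to the partial sums of every row of A, so the lattice norm bounds the
   A-transform of (w_j - w) by that of (s_j).  A-summability is linear and,
   A being regular, sums constants to themselves, so (s_j) is A-summable to 0;
   therefore so is (w_j - w), i.e. (w_j) is A-summable to w. *)

Section BanachLattice.
Variables (R : realType) (X : completeNormedModType R)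
  (le : X -> X -> Prop) (vee : X -> X -> X).
Hypothesis HX : banach_lattice le vee.

Lemma bl_leD (a b c d : X) : le a b -> le c d -> le (a + c) (b + d).
Proof.
move=> le_ab le_cd; apply: (bl_trans HX (y := b + c)); first exact: (bl_add HX).
by rewrite (addrC b c) (addrC b d); apply: (bl_add HX).
Qed.

Lemma bl_le_wsum (alpha : nat -> R) (d s : nat -> X) :
  (forall j, 0 <= alpha j) ->
  (forall j, le (- s j) (d j) /\ le (d j) (s j)) -> forall N,
  le (- \sum_(0 <= j < N) alpha j *: s j) (\sum_(0 <= j < N) alpha j *: d j) /\
  le (\sum_(0 <= j < N) alpha j *: d j) (\sum_(0 <= j < N) alpha j *: s j).
Proof.
move=> alpha_ge0 bound_ds; elim=> [|N [IHl IHr]].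
  by rewrite !big_geq // oppr0; split; apply: (bl_refl HX).
rewrite !big_nat_recr //= opprD; have [lo hi] := bound_ds N.
split; apply: bl_leD => //; last exact: (bl_scale HX).
by rewrite -scalerN; apply: (bl_scale HX).
Qed.

Lemma bl_norm_le (d s : X) : le (- s) d -> le d s -> `|d| <= `|s|.
Proof.
move=> lo hi; apply: (bl_norm HX); rewrite /absl.
apply: (bl_trans HX _ (bl_vee_ubl HX s (- s))).
apply: (bl_vee_least HX) => //.
by have := bl_add HX (s - d) lo; rewrite addrA addNr add0r addrC addrNK.
Qed.

End BanachLattice.

Section MatrixSummability.
Variables (R : realType) (X : completeNormedModType R)
  (alpha : nat -> nat -> R).

Lemma A_convergesD (u v : nat -> X) (L M : X) :
  A_converges alpha u L -> A_converges alpha v M ->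
  A_converges alpha (fun j => u j + v j) (L + M).
Proof.
move=> [tu [rows_u tu_L]] [tv [rows_v tv_M]].
exists (fun n => tu n + tv n); split; last exact: cvgD.
move=> n; under eq_fun do rewrite (eq_bigr _ (fun j _ => scalerDr _ _ _)).
under eq_fun do rewrite big_split /=.
exact: cvgD.
Qed.

Lemma A_convergesZ (c : R) (u : nat -> X) (L : X) :
  A_converges alpha u L -> A_converges alpha (fun j => c *: u j) (c *: L).
Proof.
move=> [t [rows t_L]]; exists (fun n => c *: t n).
split; last exact: cvgZ (cvg_cst c) t_L.
move=> n; suff -> : (fun N => \sum_(0 <= j < N) alpha n j *: (c *: u j)) =
    (fun N => c *: \sum_(0 <= j < N) alpha n j *: u j).
  exact: cvgZ (cvg_cst c) (rows n).
apply: funext => N; rewrite scaler_sumr; apply: eq_bigr => j _.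
by rewrite !scalerA mulrC.
Qed.

Lemma A_converges_cst (r : nat -> R) :
  (forall n, (fun N => \sum_(0 <= j < N) alpha n j) @ \oo --> r n) ->
  r @ \oo --> (1 : R) -> forall v : X, A_converges alpha (fun=> v) v.
Proof.
move=> row_sums r_1 v; exists (fun n => r n *: v); split.
  move=> n; under eq_fun do rewrite -scaler_suml.
  exact: cvgZ (row_sums n) (cvg_cst v).
by rewrite -[X in _ --> X]scale1r; exact: cvgZ r_1 (cvg_cst v).
Qed.

Lemma A_converges_eq0_dominated (d s : nat -> X) :
  (forall n N, `|\sum_(0 <= j < N) alpha n j *: d j|
               <= `|\sum_(0 <= j < N) alpha n j *: s j|) ->
  A_domain alpha d -> A_converges alpha s 0 -> A_converges alpha d 0.
Proof.
move=> dom_ds [_ [t [rows_d _]]] [ts [rows_s ts_0]]; exists t; split => //.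
have t_le n : `|t n| <= `|ts n|.
  apply: ler_cvg_to (cvg_norm (rows_d n)) (cvg_norm (rows_s n)) _.
  exact: nearW.
apply/norm_cvg0P.
apply: (squeeze_cvgr (f := fun=> 0) (h := fun n => `|ts n|) _ (cvg_cst _)).
  by apply: nearW => n; rewrite normr_ge0 t_le.
by rewrite -(normr0 X); exact: cvg_norm ts_0.
Qed.

End MatrixSummability.

Theorem theorem3p8 (R : realType) (X : completeNormedModType R)
  (le : X -> X -> Prop) (vee : X -> X -> X)
  (HX : banach_lattice le vee)
  (alpha : nat -> nat -> R)
  (Hnn : nonneg_matrix alpha) (Hreg : regular_matrix alpha) :
  preserves_order_inequalities le alpha.
Proof.
move=> wn xn yn zn w x y z C [Lw Aw] _ _ _ _ bounds Ax Ay Az.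
have [_ [_ [r [row_sums r_1]]]] := Hreg.
have cst := A_converges_cst (X := X) row_sums r_1.
have centre (u : nat -> X) (v L : X) : A_converges alpha u L ->
    A_converges alpha (fun j => u j - v) (L - v).
  by move=> Au; exact: A_convergesD Au (cst (- v)).
have As : A_converges alpha
    (fun j => C *: ((xn j - x) + (yn j - y) + (zn j - z))) 0.
  have := A_convergesZ C (A_convergesD (A_convergesD (centre _ x _ Ax)
    (centre _ y _ Ay)) (centre _ z _ Az)).
  by rewrite !subrr !addr0 scaler0.
have Ad : A_converges alpha (fun j => wn j - w) 0.
  apply: A_converges_eq0_dominated As; last by exists (Lw - w); apply: centre.
  move=> n N; have [lo hi] := bl_le_wsum HX (Hnn n) bounds N.
  exact: bl_norm_le HX _ _ lo hi.
have := A_convergesD Ad (cst w); rewrite add0r.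
by under eq_fun do rewrite subrK.
Qed.
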